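(* Let $Y$ be a real-valued random variable (representing the conditional distribution of the potential reward $R(a,x)$ given $A=a$, $X=x$) with finite second moment, and let $\alpha\ge 0$. Consider the problem $$\min_{D}\ \mathbb{E}\big[Y\,D(Y)\big]$$ over measurable functions $D:\mathbb{R}\to\mathbb{R}$ subject to (i) $D(r)\ge 0$ for all $r$, (ii) $\mathbb{E}[D(Y)]=1$, and (iii) $D(r_1)\le e^{2\alpha} D(r_2)$ for all $r_1,r_2$. Then the optimal value of this problem equals $\lambda^*$, where $\lambda^*$ is a minimizer over $\lambda\in\mathbb{R}$ of $$\mathbb{E}\big[\ell_\alpha(Y,\lambda)\big],\qquad \ell_\alpha(y,\lambda)=\{y-\lambda\}_+^2+e^{2\alpha}\{y-\lambda\}_-^2 ,$$ where $\{t\}_+=\max(t,0)$ and $\{t\}_-=\max(-t,0)$. Equivalently, with conditioning on $A=a$, $X=x$, the value $\min_D \mathbb{E}[R(a,x)D(R(a,x))\mid A=a,X=x]$ equals $f^*_{a,a'}(x)$, where $f^*_{a,a'}$ minimizes $\mathbb{E}[\ell_\alpha(R(a,x),f_{a,a'}(x))\mid A=a,X=x]$ over functions $f_{a,a'}$.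
   Context: In the paper, $D$ plays the role of the Radon–Nikodym ratio $D(r,x,a,a')=\mathrm{d}P_{R(a,x)\mid A=a',X=x}/\mathrm{d}P_{R(a,x)\mid A=a,X=x}(r)$ between conditional laws of the potential reward under a perturbed logging policy, and the constrained minimum gives a lower bound on $\mathbb{E}[R(a,x)\mid A=a',X=x]$ under uncertainty level $\alpha$. *)

From HB Require Import structures.
From mathcomp Require Import all_boot all_order all_algebra.
From mathcomp Require Import all_classical all_reals all_analysis.
Set Implicit Arguments. Unset Strict Implicit. Unset Printing Implicit Defensive.
Import Order.TTheory GRing.Theory Num.Theory.
Local Open Scope ring_scope.
Local Open Scope classical_set_scope.

Definition pos_part (R : realType) (t : R) : R := Num.max t 0.
Definition neg_part (R : realType) (t : R) : R := Num.max (- t) 0.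

Definition ell (R : realType) (alpha y lam : R) : R :=
  (pos_part (y - lam)) ^+ 2 + expR (2 * alpha) * (neg_part (y - lam)) ^+ 2.

Definition risk d (T : measurableType d) (R : realType) (P : probability T R)
  (Y : T -> R) (alpha lam : R) : \bar R :=
  (\int[P]_w (ell alpha (Y w) lam)%:E)%E.

Definition objective d (T : measurableType d) (R : realType) (P : probability T R)
  (Y : T -> R) (D : R -> R) : \bar R :=
  (\int[P]_w (Y w * D (Y w))%:E)%E.

Definition feasible d (T : measurableType d) (R : realType) (P : probability T R)
  (Y : T -> R) (alpha : R) (D : R -> R) : Prop :=
  [/\ measurable_fun setT D,
      (forall r, 0 <= D r),
      (\int[P]_w (D (Y w))%:E = 1)%E &
      (forall r1 r2, D r1 <= expR (2 * alpha) * D r2)].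

From HB Require Import structures.
From mathcomp Require Import all_boot all_order all_algebra.
From mathcomp Require Import all_classical all_reals all_analysis.
From mathcomp Require Import measurable_realfun ring lra.
Import Order.TTheory GRing.Theory Num.Theory.
Local Open Scope ring_scope.
Local Open Scope classical_set_scope.
Set Implicit Arguments. Unset Strict Implicit.

(* Write c = e^{2 alpha} >= 1 and l for the minimiser, so that
   l_alpha(y, lam) = q(y - lam) with q(t) = t_+^2 + c t_-^2.  Since
   q(t - h) <= q(t) - 2h (t_+ - c t_-) + c h^2, minimality of l forces the
   balance E[(Y - l)_+] = c E[(Y - l)_-].  A feasible D is pinched between
   m = inf D and c m, hence (y - l) D(y) >= m ((y - l)_+ - c (y - l)_-);
   integrating and using E[D(Y)] = 1 gives E[Y D(Y)] >= l.  Equality holds for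
   D proportional to 1 on [l, oo) and to c below l, for which (y - l) D(y) is
   a multiple of (y - l)_+ - c (y - l)_-. *)

(* [ell alpha y l] is convertible to [asym_sq (expR (2 * alpha)) (y - l)]. *)
Definition asym_sq (R : realType) (c t : R) : R :=
  pos_part t ^+ 2 + c * neg_part t ^+ 2.

Definition step_weight (R : realType) (c l r : R) : R := if l <= r then 1 else c.

Section pointwise.
Variable R : realType.
Implicit Types c t h m x y l : R.

Variant pos_neg_part_spec t : R -> R -> Type :=
  | PosNegPartNonneg of 0 <= t : pos_neg_part_spec t t 0
  | PosNegPartNeg of t < 0 : pos_neg_part_spec t 0 (- t).

Lemma pos_neg_partP t : pos_neg_part_spec t (pos_part t) (neg_part t).
Proof.
(* [leP 0 t] already rewrites [Num.max t 0]. *)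
rewrite /pos_part /neg_part; have [t0|t0] := leP 0 t.
- by rewrite (max_r (_ : - t <= 0)) ?oppr_le0 //; constructor.
- by rewrite (max_l (_ : 0 <= - t)) ?oppr_ge0 ?ltW //; constructor.
Qed.

Lemma norm_pos_part_le t : `|pos_part t| <= `|t|.
Proof. by case: pos_neg_partP => _; rewrite ?normr0. Qed.

Lemma norm_neg_part_le t : `|neg_part t| <= `|t|.
Proof. by case: pos_neg_partP => _; rewrite ?normr0 ?normrN. Qed.

Lemma asym_sq_le c t : 1 <= c -> asym_sq c t <= c * t ^+ 2.
Proof. by rewrite /asym_sq; case: pos_neg_partP => t0 c1; nra. Qed.

Lemma asym_sq_shift_le c t h : 1 <= c ->
  asym_sq c (t - h) <=
    asym_sq c t - 2 * h * (pos_part t - c * neg_part t) + c * h ^+ 2.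
Proof.
rewrite /asym_sq => c1.
have := sqr_ge0 h; have := sqr_ge0 (t - h).
case: (pos_neg_partP t) => t0; case: pos_neg_partP => th; try nra.
(* t >= 0 > t - h: the inequality reduces to (c - 1) t (t - 2 h) <= 0 *)
have ct_ge0 : 0 <= (c - 1) * t by apply: mulr_ge0; lra.
nra.
Qed.

Lemma pinched_mul_ge c t m x : m <= x -> x <= c * m ->
  m * (pos_part t - c * neg_part t) <= t * x.
Proof. by case: pos_neg_partP => t0; nra. Qed.

Lemma mul_step_weight c y l :
  (y - l) * step_weight c l y = pos_part (y - l) - c * neg_part (y - l).
Proof.
rewrite /step_weight -subr_ge0.
by case: pos_neg_partP => [t0|t0]; rewrite ?t0 ?(leNgt 0) ?t0 /=; ring.
Qed.

Lemma eq0_of_quad_ge0 c g : 0 < c ->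
  (forall h, 0 <= c * h ^+ 2 - 2 * h * g) -> g = 0.
Proof.
move=> c_gt0 quad_ge0; have := quad_ge0 (g / c).
have -> : c * (g / c) ^+ 2 - 2 * (g / c) * g = - (g ^+ 2 / c).
  by field; rewrite gt_eqF.
rewrite oppr_ge0 pmulr_lle0 ?invr_gt0 // => g2_le0.
by apply/eqP; rewrite -sqrf_eq0 eq_le g2_le0 sqr_ge0.
Qed.

Lemma asym_sq_ge0 c t : 0 <= c -> 0 <= asym_sq c t.
Proof.
move=> c_ge0; exact: addr_ge0 (sqr_ge0 _) (mulr_ge0 c_ge0 (sqr_ge0 _)).
Qed.

Lemma step_weight_bounds c l y : 1 <= c -> 1 <= step_weight c l y <= c.
Proof. by rewrite /step_weight; case: ifP => _ c1; apply/andP; split. Qed.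

Lemma norm_le_sqrD1 y : `|y| <= y ^+ 2 + 1.
Proof. by rewrite -real_normK ?num_real //; have := normr_ge0 y; nra. Qed.

Lemma norm_subr_le_sqr y l : `|y - l| <= y ^+ 2 + (1 + `|l|).
Proof.
rewrite addrA (le_trans (ler_normB _ _)) // lerD2r; exact: norm_le_sqrD1.
Qed.

Lemma ratio_bounded_pinched c (D : R -> R) : 0 < c -> (forall r, 0 <= D r) ->
  (forall r1 r2, D r1 <= c * D r2) -> exists m, forall r, m <= D r <= c * m.
Proof.
move=> c_gt0 D_ge0 D_ratio; exists (inf (range D)) => r; apply/andP; split.
- by apply: ge_inf; [exists 0 => _ [x _ <-] | exists r].
- rewrite -ler_pdivrMl //; apply: lb_le_inf; first by exists (D 0), 0.
  by move=> _ [x _ <-]; rewrite ler_pdivrMl.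
Qed.

Lemma measurable_pos_part_shift l :
  measurable_fun setT (fun r : R => pos_part (r - l)).
Proof. exact/measurable_maxr/measurable_cst/measurable_funB. Qed.

Lemma measurable_neg_part_shift l :
  measurable_fun setT (fun r : R => neg_part (r - l)).
Proof. exact/measurable_maxr/measurable_cst/measurable_funN/measurable_funB. Qed.

Lemma measurable_asym_sq_shift c l :
  measurable_fun setT (fun r : R => asym_sq c (r - l)).
Proof.
rewrite /asym_sq; apply: measurable_funD.
- exact: measurable_funX (measurable_pos_part_shift l).
- apply: measurable_funM; first exact: measurable_cst.
  exact: measurable_funX (measurable_neg_part_shift l).
Qed.

Lemma measurable_step_weight c l : measurable_fun setT (step_weight c l).
Proof.
apply: measurable_fun_ifT; try exact: measurable_cst.
exact: (@measurable_fun_ler _ R R setT (fun=> l) id).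
Qed.

End pointwise.

Section integrable_EFin.
Context d (T : measurableType d) (R : realType) (mu : {measure set T -> \bar R}).
Implicit Types f g : T -> R.

Lemma integrable_EFinD f g : mu.-integrable setT (EFin \o f) ->
  mu.-integrable setT (EFin \o g) -> mu.-integrable setT (EFin \o (f \+ g)).
Proof. by move=> fi gi; apply: eq_integrable (integrableD _ fi gi). Qed.

Lemma integrable_EFinB f g : mu.-integrable setT (EFin \o f) ->
  mu.-integrable setT (EFin \o g) -> mu.-integrable setT (EFin \o (f \- g)).
Proof. by move=> fi gi; apply: eq_integrable (integrableB _ fi gi). Qed.

Lemma integrable_EFinZl k f : mu.-integrable setT (EFin \o f) ->
  mu.-integrable setT (EFin \o (fun x => k * f x)).
Proof. by move=> fi; apply: eq_integrable (integrableZl _ k fi). Qed.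

Lemma Rintegral_EFin f : mu.-integrable setT (EFin \o f) ->
  (\int[mu]_x (f x)%:E)%E = (\int[mu]_x f x)%:E.
Proof. by move=> fi; rewrite fineK // integrable_fin_num. Qed.

End integrable_EFin.

Section square_integrable.
Context d (T : measurableType d) (R : realType) (P : probability T R) (Y : T -> R).
Hypotheses (mY : measurable_fun setT Y)
  (Y2 : P.-integrable setT (fun w => (Y w ^+ 2)%:E)).

Lemma Rintegral_cst_probability k : \int[P]_w k = k.
Proof.
have := @integral_cst _ _ _ P setT measurableT k%:E.
by rewrite /= probability_setT mule1 /Rintegral => ->.
Qed.

Lemma integrable_comp_sq_dominated (F : R -> R) (A B : R) :
  measurable_fun setT F -> (forall r, `|F r| <= A * r ^+ 2 + B) ->
  P.-integrable setT (EFin \o (fun w => F (Y w))).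
Proof.
move=> mF F_le.
apply: (@le_integrable _ _ _ P _ measurableT _
  (EFin \o (fun w => A * Y w ^+ 2 + B))).
- exact/measurable_EFinP/measurableT_comp.
- by move=> w _; rewrite /= lee_fin (le_trans (F_le _)) ?ler_norm.
- apply: integrable_EFinD; last exact: finite_measure_integrable_cst.
  exact/integrable_EFinZl/Y2.
Qed.

Lemma integrable_bounded_comp (F : R -> R) (K : R) :
  measurable_fun setT F -> (forall r, `|F r| <= K) ->
  P.-integrable setT (EFin \o (fun w => F (Y w))).
Proof.
move=> mF F_le; apply: (integrable_comp_sq_dominated (A := 0) (B := K)) => // r.
by rewrite mul0r add0r.
Qed.

Lemma integrable_mul_bounded_comp (F G : R -> R) (A B K : R) :
  measurable_fun setT F -> measurable_fun setT G ->
  (forall r, `|F r| <= A * r ^+ 2 + B) -> (forall r, `|G r| <= K) ->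
  P.-integrable setT (EFin \o (fun w => F (Y w) * G (Y w))).
Proof.
move=> mF mG F_le G_le.
have K_ge0 : 0 <= K := le_trans (normr_ge0 _) (G_le 0).
apply: (integrable_comp_sq_dominated (F := F \* G) (A := K * A) (B := K * B)).
  exact: measurable_funM.
move=> r; rewrite normrM -mulrA -mulrDr mulrC.
by rewrite ler_pM ?normr_ge0.
Qed.

Lemma integrable_id_mul_bounded_comp (G : R -> R) (K : R) :
  measurable_fun setT G -> (forall r, `|G r| <= K) ->
  P.-integrable setT (EFin \o (fun w => Y w * G (Y w))).
Proof.
move=> mG G_le; apply: (integrable_mul_bounded_comp (A := 1) (B := 1)
  (@measurable_id _ _ setT) mG _ G_le) => r.
by rewrite mul1r norm_le_sqrD1.
Qed.

Lemma integrable_shift_mul_bounded_comp (G : R -> R) (l K : R) :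
  measurable_fun setT G -> (forall r, `|G r| <= K) ->
  P.-integrable setT (EFin \o (fun w => (Y w - l) * G (Y w))).
Proof.
move=> mG G_le; apply: (integrable_mul_bounded_comp (A := 1) (B := 1 + `|l|)
  (measurable_funB (@measurable_id _ _ setT) (measurable_cst l)) mG _ G_le) => r.
by rewrite mul1r norm_subr_le_sqr.
Qed.

Lemma integrable_pos_part_shift l :
  P.-integrable setT (EFin \o (fun w => pos_part (Y w - l))).
Proof.
apply: (integrable_comp_sq_dominated (A := 1) (B := 1 + `|l|)
  (measurable_pos_part_shift l)) => r.
by rewrite mul1r; exact: le_trans (norm_pos_part_le _) (norm_subr_le_sqr _ _).
Qed.

Lemma integrable_neg_part_shift l :
  P.-integrable setT (EFin \o (fun w => neg_part (Y w - l))).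
Proof.
apply: (integrable_comp_sq_dominated (A := 1) (B := 1 + `|l|)
  (measurable_neg_part_shift l)) => r.
by rewrite mul1r; exact: le_trans (norm_neg_part_le _) (norm_subr_le_sqr _ _).
Qed.

Lemma integrable_pos_neg_part_shift c l :
  P.-integrable setT
    (EFin \o (fun w => pos_part (Y w - l) - c * neg_part (Y w - l))).
Proof.
apply: integrable_EFinB; first exact: integrable_pos_part_shift.
exact/integrable_EFinZl/integrable_neg_part_shift.
Qed.

Lemma integrable_asym_sq_shift c l : 1 <= c ->
  P.-integrable setT (EFin \o (fun w => asym_sq c (Y w - l))).
Proof.
move=> c1; apply: (integrable_comp_sq_dominated (A := 2 * c)
  (B := 2 * c * l ^+ 2) (measurable_asym_sq_shift c l)) => r.
rewrite ger0_norm ?asym_sq_ge0 ?(le_trans ler01) //.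
apply: le_trans (asym_sq_le _ c1) _.
by have := sqr_ge0 (r + l); nra.
Qed.

Lemma Rintegral_mul_centered (D : R -> R) l :
  P.-integrable setT (EFin \o (fun w => D (Y w))) ->
  P.-integrable setT (EFin \o (fun w => Y w * D (Y w))) ->
  \int[P]_w D (Y w) = 1 ->
  \int[P]_w (Y w * D (Y w)) = l + \int[P]_w ((Y w - l) * D (Y w)).
Proof.
move=> iD iYD D1.
have -> : \int[P]_w ((Y w - l) * D (Y w)) =
    \int[P]_w (Y w * D (Y w) - l * D (Y w)).
  by apply: eq_Rintegral => w _; rewrite mulrBl.
rewrite RintegralB ?RintegralZl ?D1 //; last exact: integrable_EFinZl.
by rewrite mulr1 addrC subrK.
Qed.

Lemma asym_sq_minimizer_balanced c l : 1 <= c ->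
  (forall lam,
    \int[P]_w asym_sq c (Y w - l) <= \int[P]_w asym_sq c (Y w - lam)) ->
  \int[P]_w (pos_part (Y w - l) - c * neg_part (Y w - l)) = 0.
Proof.
move=> c1 l_min; apply: (@eq0_of_quad_ge0 _ c); first lra.
move=> h; set e := fun w => pos_part (Y w - l) - c * neg_part (Y w - l).
have ie : P.-integrable setT (EFin \o e) := integrable_pos_neg_part_shift c l.
have iq := integrable_asym_sq_shift l c1.
have iqe := integrable_EFinB iq (integrable_EFinZl (2 * h) ie).
have ich := finite_measure_integrable_cst P (c * h ^+ 2) measurableT.
have shift_le : \int[P]_w asym_sq c (Y w - (l + h)) <=
    \int[P]_w (asym_sq c (Y w - l) - 2 * h * e w + c * h ^+ 2).
  apply: le_Rintegral => //; first exact: integrable_asym_sq_shift.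
  - exact: integrable_EFinD.
  - by move=> w _; rewrite opprD addrA asym_sq_shift_le.
rewrite RintegralD // Rintegral_cst_probability RintegralB //
  ?RintegralZl // in shift_le; last exact: integrable_EFinZl.
by have := l_min (l + h); lra.
Qed.

Lemma feasible_objective_ge alpha l D : feasible P Y alpha D ->
  \int[P]_w (pos_part (Y w - l) - expR (2 * alpha) * neg_part (Y w - l)) = 0 ->
  (l%:E <= objective P Y D)%E.
Proof.
set c := expR (2 * alpha) => -[mD D_ge0 D1 D_ratio] balanced.
have [m m_pinched] := ratio_bounded_pinched (expR_gt0 _) D_ge0 D_ratio.
have D_le r : `|D r| <= c * D 0 by rewrite ger0_norm.
have iD := integrable_bounded_comp mD D_le.
have iYD := integrable_id_mul_bounded_comp mD D_le.
move: D1; rewrite Rintegral_EFin // => -[D1].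
rewrite /objective Rintegral_EFin // lee_fin (Rintegral_mul_centered l) // lerDl.
have ie := integrable_pos_neg_part_shift c l.
rewrite -(mulr0 m) -balanced -RintegralZl //.
apply: le_Rintegral => //.
- exact: integrable_EFinZl.
- exact: integrable_shift_mul_bounded_comp mD D_le.
- by move=> w _; apply: pinched_mul_ge; have /andP[] := m_pinched (Y w).
Qed.

Lemma step_weight_optimal alpha l : 0 <= alpha ->
  \int[P]_w (pos_part (Y w - l) - expR (2 * alpha) * neg_part (Y w - l)) = 0 ->
  exists D, feasible P Y alpha D /\ objective P Y D = l%:E.
Proof.
set c := expR (2 * alpha) => alpha_ge0 balanced.
have c1 : 1 <= c by rewrite /c -[leLHS]expR0 ler_expR mulr_ge0.
have wt_bounds := step_weight_bounds l ^~ c1.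
have wt_ge0 r : 0 <= step_weight c l r.
  by have /andP[wt_ge1 _] := wt_bounds r; rewrite (le_trans ler01).
have wt_le r : `|step_weight c l r| <= c.
  by have /andP[_ wt_le] := wt_bounds r; rewrite ger0_norm.
have iwt := integrable_bounded_comp (measurable_step_weight c l) wt_le.
set Z := \int[P]_w step_weight c l (Y w).
have Z_ge1 : 1 <= Z.
  rewrite -[leLHS](Rintegral_cst_probability 1) le_Rintegral //.
    exact: finite_measure_integrable_cst.
  by move=> w _; have /andP[] := wt_bounds (Y w).
have Zinv_ge0 : 0 <= Z^-1 by rewrite invr_ge0 (le_trans ler01).
pose D r := Z^-1 * step_weight c l r.
have mD : measurable_fun setT D.
  exact: measurable_funM (measurable_cst _) (measurable_step_weight c l).
have D_le r : `|D r| <= Z^-1 * c.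
  by rewrite normrM ger0_norm // ler_wpM2l.
have iD := integrable_bounded_comp mD D_le.
have D1 : \int[P]_w D (Y w) = 1.
  by rewrite RintegralZl // mulVf // gt_eqF // (lt_le_trans ltr01).
exists D; split; first split => //.
- by move=> r; rewrite mulr_ge0.
- by rewrite Rintegral_EFin // D1.
- move=> r1 r2; rewrite /D mulrCA ler_wpM2l //.
  have /andP[_ wt_le1] := wt_bounds r1; have /andP[wt_ge1 _] := wt_bounds r2.
  by rewrite (le_trans wt_le1) // ler_peMr // (le_trans ler01).
have iYD := integrable_id_mul_bounded_comp mD D_le.
rewrite /objective Rintegral_EFin // (Rintegral_mul_centered l) //.
under eq_Rintegral do rewrite /D mulrCA mul_step_weight.
rewrite RintegralZl ?balanced ?mulr0 ?addr0 //.
exact: integrable_pos_neg_part_shift.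
Qed.

End square_integrable.

Theorem lemma2 (d : measure_display) (T : measurableType d) (R : realType)
  (P : probability T R) (Y : T -> R) (alpha lamstar : R) :
  measurable_fun setT Y ->
  P.-integrable setT (fun w => ((Y w) ^+ 2)%:E) ->
  0 <= alpha ->
  (forall lam : R, (risk P Y alpha lamstar <= risk P Y alpha lam)%E) ->
  (exists D : R -> R, feasible P Y alpha D /\ objective P Y D = lamstar%:E) /\
  (forall D : R -> R, feasible P Y alpha D -> (lamstar%:E <= objective P Y D)%E).
Proof.
move=> mY Y2 alpha_ge0 lamstar_min.
have c1 : 1 <= expR (2 * alpha) by rewrite -[leLHS]expR0 ler_expR mulr_ge0.
have balanced : \int[P]_w (pos_part (Y w - lamstar)
    - expR (2 * alpha) * neg_part (Y w - lamstar)) = 0.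
  apply: (asym_sq_minimizer_balanced mY Y2 c1) => lam.
  rewrite -lee_fin -!Rintegral_EFin; try exact: integrable_asym_sq_shift.
  exact: lamstar_min.
split; first exact (step_weight_optimal mY Y2 alpha_ge0 balanced).
by move=> D feasD; exact (feasible_objective_ge mY Y2 feasD balanced).
Qed.
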